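(* For every integer $h \geq 3$ and every positive integer $N$, \[ \psi(N,h,h) \geq \frac{1}{\cos(\pi/h)} \left( \frac{4}{3 - \cos(\pi/h)} - 1 \right). \]
   Context: $[N] = \{1,2,\dots,N\}$. For positive integers $K$ and $h \geq 3$, let $\mathcal{F}_{K,h}$ be the set of all functions $F(x) = \sum_{j=1}^K b_j \cos(jx)$ with real coefficients satisfying $\sum_{j=1}^K |b_j| = \frac{1}{\cos(\pi/h)}$. For nonempty $A \subseteq [N]$ and $F \in \mathcal{F}_{K,h}$ let $w_F(A) = \sum_{a \in A} F\!\left( \left(a - \frac{N+1}{2}\right) \frac{2\pi}{hN} \right)$, and let \[ \psi(N,K,h) = \min_{\emptyset \neq A \subseteq [N]} \sup \left\{ \frac{w_F(A)}{|A|} : F \in \mathcal{F}_{K,h} \right\}. \] *)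

From Stdlib Require Import Reals List.
Import ListNotations.
Open Scope R_scope.

Fixpoint sum1 (K : nat) (f : nat -> R) : R :=
  match K with
  | O => 0
  | S k => sum1 k f + f (S k)
  end.

(* F(x) = sum_{j=1}^K b_j cos(j x), F given by its coefficient sequence b (b_j for j = 1..K). *)
Definition Fval (K : nat) (b : nat -> R) (x : R) : R :=
  sum1 K (fun j => b j * cos (INR j * x)).

Definition in_FKh (K h : nat) (b : nat -> R) : Prop :=
  sum1 K (fun j => Rabs (b j)) = 1 / cos (PI / INR h).

(* A nonempty subset A of [N] = {1..N}, represented by a duplicate-free list. *)
Definition nonempty_subset_N (N : nat) (A : list nat) : Prop :=
  A <> [] /\ NoDup A /\ (forall a, In a A -> (1 <= a <= N)%nat).

Definition wF (N K h : nat) (b : nat -> R) (A : list nat) : R :=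
  fold_right
    (fun a acc => Fval K b ((INR a - (INR N + 1) / 2) * (2 * PI / (INR h * INR N))) + acc)
    0 A.

Definition ratio_set (N K h : nat) (A : list nat) (r : R) : Prop :=
  exists b, in_FKh K h b /\ r = wF N K h b A / INR (length A).

(* psi(N,K,h) >= c, i.e. min over nonempty A ⊆ [N] of sup(ratio_set A) >= c,
   unfolded: for every nonempty A, every upper bound of ratio_set A is >= c
   (equivalently sup(ratio_set A) >= c). *)
Definition psi_ge (N K h : nat) (c : R) : Prop :=
  forall A, nonempty_subset_N N A ->
    forall u, is_upper_bound (ratio_set N K h A) u -> c <= u.

(* For |x| <= pi/h one has the pointwise bound
     cos x >= (1 + c)/2 + (1 - c)/2 * cos(h x),   c = cos(pi/h),
   which follows, after halving the angles, from the monotonicity of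
   sin(h v) / sin v on [0, pi/(2h)].  Averaging over A, either the mean of
   cos(h x) is at most -(1 + c)/(3 - c), and F = -cos(h x)/c does the job,
   or the mean of cos x is at least (1 + c)/(3 - c), and F = cos x / c does.
   In both cases the mean of F is at least (1 + c)/((3 - c) c), which is the
   claimed bound. *)

From Stdlib Require Import Reals List Lra Lia.
Open Scope R_scope.

(** [sin_quot n v] is sin(n v) / sin v, i.e. U_{n-1}(cos v), defined without division. *)
Fixpoint sin_quot (n : nat) (v : R) : R :=
  match n with
  | O => 0
  | S m => sin_quot m v * cos v + cos (INR m * v)
  end.

Lemma sin_INR_mul n v : sin (INR n * v) = sin v * sin_quot n v.
Proof.
  induction n as [|n IH]; simpl sin_quot.
  - rewrite Rmult_0_l, sin_0; ring.
  - rewrite S_INR, Rmult_plus_distr_r, Rmult_1_l, sin_plus, IH; ring.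
Qed.

Lemma sin_quot_antitone n v w : 0 <= v -> v <= w -> INR n * w <= PI / 2 ->
  0 <= sin_quot n w /\ sin_quot n w <= sin_quot n v.
Proof.
  revert v w; induction n as [|n IH]; intros v w Hv Hvw Hw; simpl sin_quot; [lra|].
  rewrite S_INR in Hw.
  pose proof (pos_INR n) as Hn; pose proof PI_RGT_0 as HPI.
  assert (Hw1 : w <= PI / 2) by nra.
  destruct (IH v w Hv Hvw ltac:(nra)) as [H0 Hle].
  assert (0 <= cos w) by (apply cos_ge_0; lra).
  assert (cos w <= cos v) by (apply cos_decr_1; lra).
  assert (0 <= cos (INR n * w)) by (apply cos_ge_0; nra).
  assert (cos (INR n * w) <= cos (INR n * v)) by (apply cos_decr_1; nra).
  split; nra.
Qed.

Lemma sin_mul_ratio_le n v w : 0 <= v -> v <= w -> INR n * w <= PI / 2 ->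
  sin v * sin (INR n * w) <= sin w * sin (INR n * v).
Proof.
  intros Hv Hvw Hw.
  destruct n as [|n]; [rewrite !Rmult_0_l, sin_0; lra|].
  assert (Hw1 : w <= PI / 2).
  { pose proof (pos_INR n); rewrite S_INR in Hw; nra. }
  pose proof PI_RGT_0 as HPI.
  assert (0 <= sin v) by (apply sin_ge_0; lra).
  assert (0 <= sin w) by (apply sin_ge_0; lra).
  destruct (sin_quot_antitone (S n) v w Hv Hvw Hw).
  rewrite !sin_INR_mul.
  assert (0 <= sin v * sin w * (sin_quot (S n) v - sin_quot (S n) w))
    by (apply Rmult_le_pos; nra).
  nra.
Qed.

Lemma cos_ge_affine_cos_mul_nonneg n x : (1 <= n)%nat -> 0 <= x -> x <= PI / INR n ->
  (1 + cos (PI / INR n)) / 2 + (1 - cos (PI / INR n)) / 2 * cos (INR n * x) <= cos x.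
Proof.
  intros Hn Hx0 Hx.
  pose proof PI_RGT_0 as HPI.
  assert (Hn1 : 1 <= INR n) by (apply (le_INR 1); lia).
  set (v := x / 2); set (w := PI / INR n / 2).
  assert (Hvw : v <= w) by (unfold v, w; lra).
  assert (Hnw : INR n * w = PI / 2) by (unfold w; field; lra).
  assert (Hw : w <= PI / 2) by nra.
  pose proof (sin_mul_ratio_le n v w ltac:(unfold v; lra) Hvw ltac:(lra)) as Hsin.
  rewrite Hnw, sin_PI2, Rmult_1_r in Hsin.
  assert (0 <= sin v) by (apply sin_ge_0; unfold v in *; lra).
  assert (INR n * v <= INR n * w) by (apply Rmult_le_compat_l; lra).
  assert (0 <= sin (INR n * v)) by (apply sin_ge_0; unfold v in *; nra).
  assert (Ex : x = 2 * v) by (unfold v; field).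
  assert (Ec : PI / INR n = 2 * w) by (unfold w; field; lra).
  rewrite Ec, Ex.
  replace (INR n * (2 * v)) with (2 * (INR n * v)) by ring.
  rewrite !cos_2a_sin.
  assert (sin v * sin v <= (sin w * sin (INR n * v)) * (sin w * sin (INR n * v)))
    by (apply Rmult_le_compat; lra).
  nra.
Qed.

Lemma cos_ge_affine_cos_mul n x : (1 <= n)%nat -> - (PI / INR n) <= x <= PI / INR n ->
  (1 + cos (PI / INR n)) / 2 + (1 - cos (PI / INR n)) / 2 * cos (INR n * x) <= cos x.
Proof.
  intros Hn Hx.
  destruct (Rle_dec 0 x) as [Hx0|Hx0].
  - apply cos_ge_affine_cos_mul_nonneg; [exact Hn | lra | lra].
  - rewrite <- (cos_neg x), <- (cos_neg (INR n * x)), Ropp_mult_distr_r.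
    apply cos_ge_affine_cos_mul_nonneg; [exact Hn | lra | lra].
Qed.

Lemma cos_PI_div_pos h : (3 <= h)%nat -> 0 < cos (PI / INR h).
Proof.
  intros Hh.
  pose proof PI_RGT_0 as HPI.
  assert (H3 : 3 <= INR h) by (pose proof (le_INR 3 h ltac:(lia)) as H; simpl in H; lra).
  assert (0 < PI / INR h) by (apply Rdiv_lt_0_compat; lra).
  assert (PI / INR h <= PI / 3) by (apply Rmult_le_compat_l; [lra | apply Rinv_le_contravar; lra]).
  apply cos_gt_0; lra.
Qed.

Definition node (N h a : nat) : R :=
  (INR a - (INR N + 1) / 2) * (2 * PI / (INR h * INR N)).

Lemma node_bound N h a : (1 <= h)%nat -> (1 <= a <= N)%nat ->
  - (PI / INR h) <= node N h a <= PI / INR h.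
Proof.
  intros Hh [Ha HaN].
  pose proof PI_RGT_0 as HPI.
  apply (le_INR 1) in Ha; apply le_INR in HaN; simpl in Ha.
  assert (Hh1 : 1 <= INR h) by (apply (le_INR 1); lia).
  set (q := PI / (INR h * INR N)).
  assert (0 < q) by (unfold q; apply Rdiv_lt_0_compat; nra).
  assert (Enode : node N h a = (2 * INR a - INR N - 1) * q) by (unfold node, q; field; lra).
  assert (Ebound : PI / INR h = INR N * q) by (unfold q; field; lra).
  rewrite Enode, Ebound; split; nra.
Qed.

Definition lsum (f : nat -> R) (A : list nat) : R :=
  fold_right (fun a acc => f a + acc) 0 A.

Lemma lsum_le f g A : (forall a, In a A -> f a <= g a) -> lsum f A <= lsum g A.
Proof.
  induction A as [|a A IH]; intros Hfg; simpl; [lra|].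
  apply Rplus_le_compat; [apply Hfg; left; reflexivity|].
  apply IH; intros b Hb; apply Hfg; right; exact Hb.
Qed.

Lemma lsum_affine c d f A :
  lsum (fun a => c + d * f a) A = c * INR (length A) + d * lsum f A.
Proof.
  induction A as [|a A IH]; simpl lsum; [simpl; ring|].
  simpl length; rewrite S_INR; unfold lsum in *; rewrite IH; ring.
Qed.

Lemma sum1_zero K g : (forall j, (1 <= j <= K)%nat -> g j = 0) -> sum1 K g = 0.
Proof.
  induction K as [|K IH]; intros Hg; simpl; [reflexivity|].
  rewrite IH, Hg; [ring | lia | intros j Hj; apply Hg; lia].
Qed.

Lemma sum1_single K k g : (1 <= k <= K)%nat -> (forall j, j <> k -> g j = 0) ->
  sum1 K g = g k.
Proof.
  induction K as [|K IH]; intros Hk Hg; [lia|]; simpl.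
  destruct (Nat.eq_dec (S K) k) as [<-|Hne].
  - rewrite sum1_zero by (intros j Hj; apply Hg; lia); ring.
  - rewrite IH, (Hg (S K) Hne); [ring | lia | exact Hg].
Qed.

Definition single (k : nat) (c : R) : nat -> R :=
  fun j => if Nat.eqb j k then c else 0.

Lemma single_other k c j : j <> k -> single k c j = 0.
Proof. intros Hne; unfold single; apply Nat.eqb_neq in Hne; rewrite Hne; reflexivity. Qed.

Lemma single_at k c : single k c k = c.
Proof. unfold single; rewrite Nat.eqb_refl; reflexivity. Qed.

Lemma in_FKh_single K h k c : (1 <= k <= K)%nat -> Rabs c = 1 / cos (PI / INR h) ->
  in_FKh K h (single k c).
Proof.
  intros Hk Hc; unfold in_FKh.
  rewrite (sum1_single K k _ Hk); [rewrite single_at; exact Hc|].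
  intros j Hj; rewrite single_other by exact Hj; apply Rabs_R0.
Qed.

Lemma wF_single N K h k c A : (1 <= k <= K)%nat ->
  wF N K h (single k c) A = c * lsum (fun a => cos (INR k * node N h a)) A.
Proof.
  intros Hk; induction A as [|a A IH]; simpl; [ring|].
  unfold lsum in IH; rewrite IH; unfold Fval.
  rewrite (sum1_single K k _ Hk); [rewrite single_at; unfold lsum, node; ring|].
  intros j Hj; rewrite single_other by exact Hj; ring.
Qed.

Lemma ratio_set_single N K h k c A : (1 <= k <= K)%nat ->
  Rabs c = 1 / cos (PI / INR h) ->
  ratio_set N K h A (c * lsum (fun a => cos (INR k * node N h a)) A / INR (length A)).
Proof.
  intros Hk Hc; exists (single k c); split.
  - apply in_FKh_single; assumption.
  - rewrite wF_single by assumption; reflexivity.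
Qed.

(* The threshold T = (1 + c)/(3 - c) is the fixed point of m |-> (1 + c)/2 - (1 - c)/2 * m. *)
Lemma mean_dichotomy c n S1 S2 : 0 < c <= 1 -> 0 < n ->
  (1 + c) / 2 * n + (1 - c) / 2 * S2 <= S1 ->
  (1 / c) * (4 / (3 - c) - 1) <= (1 / c) * S1 / n \/
  (1 / c) * (4 / (3 - c) - 1) <= - (1 / c) * S2 / n.
Proof.
  intros Hc Hn HS.
  set (T := (1 + c) / (3 - c)).
  replace ((1 / c) * (4 / (3 - c) - 1)) with (T / c) by (unfold T; field; lra).
  replace ((1 / c) * S1 / n) with ((S1 / n) / c) by (field; lra).
  replace (- (1 / c) * S2 / n) with ((- S2 / n) / c) by (field; lra).
  assert (HT : T = (1 + c) / 2 - (1 - c) / 2 * T) by (unfold T; field; lra).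
  assert (Hdiv : forall m, T * n <= m -> T / c <= m / n / c).
  { intros m Hm; apply Rmult_le_compat_r; [left; apply Rinv_0_lt_compat; lra|].
    apply Rmult_le_reg_r with n; [lra|].
    unfold Rdiv; rewrite Rmult_assoc, Rinv_l by lra; lra. }
  destruct (Rle_lt_dec S2 (- T * n)) as [Hle|Hlt].
  - right; apply Hdiv; lra.
  - left; apply Hdiv.
    assert (0 <= (1 - c) / 2 * (S2 + T * n)) by (apply Rmult_le_pos; lra).
    nra.
Qed.

Theorem mainTheorem7 (h N : nat) (hh : (3 <= h)%nat) (hN : (1 <= N)%nat) :
  psi_ge N h h
    ((1 / cos (PI / INR h)) * (4 / (3 - cos (PI / INR h)) - 1)).
Proof.
  intros A [HAne [_ HAin]] u Hu.
  pose proof (cos_PI_div_pos h hh) as Hc0.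
  pose proof (COS_bound (PI / INR h)) as Hc1.
  set (c := cos (PI / INR h)) in *.
  assert (Hinv : Rabs (1 / c) = 1 / c)
    by (apply Rabs_right; left; apply Rdiv_lt_0_compat; lra).
  assert (Hlen : 0 < INR (length A)).
  { destruct A as [|a A]; [contradiction|]; simpl length; rewrite S_INR.
    pose proof (pos_INR (length A)); lra. }
  set (S1 := lsum (fun a => cos (INR 1 * node N h a)) A).
  set (S2 := lsum (fun a => cos (INR h * node N h a)) A).
  assert (HS : (1 + c) / 2 * INR (length A) + (1 - c) / 2 * S2 <= S1).
  { unfold S1, S2; rewrite <- lsum_affine; apply lsum_le; intros a Ha.
    change (INR 1) with 1; rewrite Rmult_1_l.
    apply cos_ge_affine_cos_mul; [lia|].
    apply node_bound; [lia | auto]. }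
  destruct (mean_dichotomy c _ _ _ (conj Hc0 (proj2 Hc1)) Hlen HS) as [H | H];
    eapply Rle_trans; try exact H; apply Hu.
  - apply ratio_set_single; [lia | exact Hinv].
  - apply ratio_set_single; [lia | rewrite Rabs_Ropp; exact Hinv].
Qed.
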